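(* For $n\ge1$ let $U_n(z)$ be the $n\times n$ matrix with entries $[U_n(z)]_{i,j}=z^{|i-j|}$, and let $\phi_n(x,z)=\det[U_n(z)-xI]$, with $\phi_0(x,z)=1$. Then $\phi_1(x,z)=1-x$ and for $n\ge2$ $$\phi_n(x,z)=\big(1-x-z^2(1+x)\big)\phi_{n-1}(x,z)-x^2z^2\phi_{n-2}(x,z).$$ *)

From mathcomp Require Import all_boot all_algebra.
Set Implicit Arguments. Unset Strict Implicit. Unset Printing Implicit Defensive.
Import GRing.Theory.
Local Open Scope ring_scope.

Definition Umx (R : comRingType) (n : nat) (z : R) : 'M[R]_n :=
  \matrix_(i < n, j < n) z ^+ `|(i : nat) - (j : nat)|%N.

(* phi_n(x,z) = det (U_n(z) - x I); for n = 0 the empty determinant is 1 *)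
Definition phi (R : comRingType) (n : nat) (x z : R) : R :=
  \det (Umx n z - x%:M).

From mathcomp Require Import all_boot all_algebra.
From mathcomp Require Import ring.
Set Implicit Arguments. Unset Strict Implicit.
Import GRing.Theory.
Local Open Scope ring_scope.

(* Subtract z times the second row of U_{n+2}(z) - xI from its first row, and
   likewise for the columns.  Since z^j = z * z^(j-1), this unimodular
   congruence leaves only the entries 1 - x - z^2(1+x) and zx in the first row
   and column, and it does not touch the lower-right block U_{n+1}(z) - xI.
   Expanding along the first row, then the first column of the remaining
   minor, gives the recurrence. *)

Section CornerElimination.
Variables (R : comPzRingType) (n : nat).
Local Notation i1 := (lift ord0 (@ord0 n)).

Lemma expand_det_corner (M : 'M[R]_n.+2) :
  (forall j : 'I_n.+2, (1 < j)%N -> M ord0 j = 0) ->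
  (forall i : 'I_n.+2, (1 < i)%N -> M i ord0 = 0) ->
  \det M = M ord0 ord0 * \det (row' ord0 (col' ord0 M))
           - M ord0 i1 * M i1 ord0
             * \det (row' ord0 (col' ord0 (row' ord0 (col' ord0 M)))).
Proof.
move=> M0j Mi0; have lift10 : lift i1 ord0 = ord0 by apply: val_inj.
rewrite (expand_det_row M ord0) !big_ord_recl big1 ?addr0; last first.
  by move=> j _; rewrite M0j ?mul0r.
set N := row' ord0 (col' i1 M).
have -> : cofactor M ord0 i1 = - (M i1 ord0 *
   \det (row' ord0 (col' ord0 (row' ord0 (col' ord0 M))))).
  rewrite /cofactor -/N (expand_det_col N ord0) big_ord_recl big1 ?addr0; last first.
    by move=> i _; rewrite !mxE lift10 Mi0 ?mul0r.
  rewrite /cofactor !mxE lift10 /= expr1 expr0 mul1r mulN1r; congr (- (_ * \det _)).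
  by apply/matrixP => i j; rewrite /N !mxE; congr (M _ _); apply: val_inj.
by rewrite /cofactor addn0 expr0 mul1r mulrN mulrA.
Qed.

Definition shear_mx (c : R) : 'M[R]_n.+2 := 1%:M - c *: delta_mx ord0 i1.

Lemma shear_mulmxE c (M : 'M[R]_n.+2) i j :
  (shear_mx c *m M) i j = M i j - (i == ord0)%:R * c * M i1 j.
Proof.
rewrite mulmxBl mul1mx -scalemxAl !mxE (bigD1 i1) //= big1 => [|k nk].
  by rewrite !mxE eqxx andbT addr0 mulrA [c * _]mulrC.
by rewrite !mxE (negbTE nk) andbF mul0r.
Qed.

Lemma mulmx_tr_shearE c (M : 'M[R]_n.+2) i j :
  (M *m (shear_mx c)^T) i j = M i j - (j == ord0)%:R * c * M i i1.
Proof. by rewrite -[M]trmxK -trmx_mul mxE shear_mulmxE !mxE. Qed.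

Lemma det_shear c : \det (shear_mx c) = 1.
Proof.
rewrite -det_tr det_trig; last first.
  apply/is_trig_mxP => i j lt_ij; rewrite !mxE.
  have /negbTE-> : j != i by apply/eqP => ji; rewrite ji ltnn in lt_ij.
  have /negbTE-> : j != ord0 by apply/eqP => j0; rewrite j0 in lt_ij.
  by rewrite mulr0 subr0.
apply: big1 => i _; rewrite !mxE eqxx.
by case: eqP => [->|_]; rewrite ?andbF mulr0 subr0.
Qed.

Lemma det_shear_congr c (M : 'M[R]_n.+2) :
  \det (shear_mx c *m M *m (shear_mx c)^T) = \det M.
Proof. by rewrite !det_mulmx det_tr det_shear mul1r mulr1. Qed.

Lemma minor00_shear_congr c (M : 'M[R]_n.+2) :
  row' ord0 (col' ord0 (shear_mx c *m M *m (shear_mx c)^T)) =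
  row' ord0 (col' ord0 M).
Proof.
apply/matrixP => i j; rewrite 2![LHS]mxE 2![RHS]mxE mulmx_tr_shearE !shear_mulmxE.
by rewrite !mulr0n !mul0r !subr0.
Qed.

Lemma trmx_shear_congr c (M : 'M[R]_n.+2) :
  (shear_mx c *m M *m (shear_mx c)^T)^T = shear_mx c *m M^T *m (shear_mx c)^T.
Proof. by rewrite !trmx_mul trmxK mulmxA. Qed.

End CornerElimination.
Arguments shear_mx {R n}.

Section KacMurdockSzego.
Variables (R : comNzRingType) (x z : R).

Lemma trmx_Umx n : (Umx n z)^T = Umx n z.
Proof. by apply/matrixP => i j; rewrite !mxE distnC. Qed.

Lemma Umx_minor00 n :
  row' ord0 (col' ord0 (Umx n.+1 z - x%:M)) = Umx n z - x%:M.
Proof. by apply/matrixP => i j; rewrite !mxE /= (distnDl 1). Qed.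

Let B (n : nat) : 'M[R]_n.+2 := shear_mx z *m (Umx n.+2 z - x%:M) *m (shear_mx z)^T.

Lemma trmx_B n : (B n)^T = B n.
Proof. by rewrite /B trmx_shear_congr linearB /= trmx_Umx tr_scalar_mx. Qed.

Lemma B_row0 n (j : 'I_n.+2) :
  B n ord0 j = match val j with
               | 0 => 1 - x - z ^+ 2 * (1 + x)
               | 1 => z * x
               | _ => 0
               end.
Proof.
rewrite /B mulmx_tr_shearE !shear_mulmxE !mxE /=.
by case: j => [[|[|k]] ?]; rewrite /bump /= ?addn0 ?subSS ?subn0 ?exprS ?expr0; ring.
Qed.

Lemma phiSS n :
  phi n.+2 x z = (1 - x - z ^+ 2 * (1 + x)) * phi n.+1 x z
                 - x ^+ 2 * z ^+ 2 * phi n x z.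
Proof.
have B_col0 i : B n i ord0 = B n ord0 i by rewrite -{1}trmx_B mxE.
rewrite /phi -(det_shear_congr z) -/(B n) expand_det_corner.
- by rewrite (B_col0 (lift ord0 ord0)) !B_row0 /B minor00_shear_congr !Umx_minor00 /=; ring.
- by case=> [[|[|k]] ?] //; rewrite B_row0.
- by case=> [[|[|k]] ?] //; rewrite B_col0 B_row0.
Qed.

End KacMurdockSzego.

Theorem lemma4p1 (R : comRingType) :
  (forall x z : R, phi 0 x z = 1) /\
  (forall x z : R, phi 1 x z = 1 - x) /\
  (forall (n : nat) (x z : R), (2 <= n)%N ->
     phi n x z = (1 - x - z ^+ 2 * (1 + x)) * phi n.-1 x z
                 - x ^+ 2 * z ^+ 2 * phi n.-2 x z).
Proof.
split; first by move=> x z; rewrite /phi det_mx00.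
split; first by move=> x z; rewrite /phi det_mx11 !mxE /= expr0 mulr1n.
by case=> [|[|n]] // x z _; rewrite phiSS.
Qed.
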